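(* Let $V$ be a finite-dimensional real inner product space with an orthogonal basis $e_1,\dots,e_M$ of nonzero vectors. Let $\beta\in V$ be nonzero and suppose there exist a positive integer $L$, functions $l_1\le l_2:\{1,\dots,L\}\to\mathbb Z$ and a partition $\{\Delta_{h,m}:(h,m)\in J\}$ of $\{1,\dots,M\}$ into nonempty sets, $J=\{(h,m):1\le h\le L,\ l_1(h)\le m\le l_2(h)\}$, such that with $r_{h,m}=\sum_{j\in\Delta_{h,m}}\|e_j\|^{-2}$ and $\epsilon(h)=(\sum_m m\,r_{h,m})/(\sum_m r_{h,m})$ (sums over $l_1(h)\le m\le l_2(h)$) we have $-1/2\le\epsilon(h)<1/2$, $\epsilon(1)>\cdots>\epsilon(L)$, and $\beta/\|\beta\|^2=\sum_{h=1}^L\sum_{m=l_1(h)}^{l_2(h)}\sum_{j\in\Delta_{h,m}}(\epsilon(h)-m)e_j/\|e_j\|^2$. Let $i\in\Delta_{h,m}$ and $j\in\Delta_{h',m'}$. Then $\beta\cdot(e_i-e_j)=\|\beta\|^2$ if and only if $h'=h$ and $m'=m+1$; and $\beta\cdot(e_i-e_j)\ge\|\beta\|^2$ if and only if either $m'\ge m+2$, or $m'=m+1$ and $h'\ge h$. *)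

From HB Require Import structures.
From mathcomp Require Import all_boot all_order all_algebra.
From mathcomp Require Import reals.
Set Implicit Arguments. Unset Strict Implicit. Unset Printing Implicit Defensive.
Import Order.TTheory GRing.Theory Num.Theory.
Local Open Scope ring_scope.

Definition inner_product (R : realType) (V : lmodType R) (dot : V -> V -> R) :=
  [/\ (forall (a : R) (x y z : V), dot (a *: x + y) z = a * dot x z + dot y z),
      (forall x y : V, dot x y = dot y x) &
      (forall x : V, x != 0 -> 0 < dot x x)].

Definition orthogonal_basis (R : realType) (V : lmodType R)
  (dot : V -> V -> R) (M : nat) (e : 'I_M -> V) :=
  [/\ (forall i, e i != 0),
      (forall i j, i != j -> dot (e i) (e j) = 0) &
      (forall v : V, exists c : 'I_M -> R, v = \sum_(i < M) c i *: e i)].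

Definition irange (a b : int) : seq int :=
  [seq a + (k%:Z) | k <- iota 0 (absz (b - a)).+1].

(* The partition {Delta_{h,m}} is given by labelling functions:
   j \in Delta_{h,m} iff hl j = h and ml j = m. *)
Definition Delta (M : nat) (hl : 'I_M -> nat) (ml : 'I_M -> int)
  (h : nat) (m : int) : {set 'I_M} :=
  [set j | (hl j == h) && (ml j == m)].

Definition rr (R : realType) (V : lmodType R) (dot : V -> V -> R) (M : nat)
  (e : 'I_M -> V) (hl : 'I_M -> nat) (ml : 'I_M -> int) (h : nat) (m : int) : R :=
  \sum_(j in Delta hl ml h m) (dot (e j) (e j))^-1.

Definition eps (R : realType) (V : lmodType R) (dot : V -> V -> R) (M : nat)
  (e : 'I_M -> V) (hl : 'I_M -> nat) (ml : 'I_M -> int) (l1 l2 : nat -> int)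
  (h : nat) : R :=
  (\sum_(m <- irange (l1 h) (l2 h)) m%:~R * rr dot e hl ml h m) /
  (\sum_(m <- irange (l1 h) (l2 h)) rr dot e hl ml h m).

(* Pairing the expansion of [beta / |beta|^2] with [e_k] reads off the
   coordinates [beta . e_k = |beta|^2 (eps(h) - m)] for [k] in [Delta_{h,m}].
   Hence [beta . (e_i - e_j) / |beta|^2 = (eps(h) - eps(h')) + (m' - m)], an
   integer plus a number in [(-1, 1)] whose sign is that of [h' - h], because
   [eps] takes values in [[-1/2, 1/2)] and is strictly decreasing. *)

From HB Require Import structures.
From mathcomp Require Import all_boot all_order all_algebra.
From mathcomp Require Import reals.
From mathcomp Require Import zify ring lra.
Set Implicit Arguments. Unset Strict Implicit.
Import Order.TTheory GRing.Theory Num.Theory.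
Local Open Scope ring_scope.

Section InnerProduct.
Variables (R : realType) (V : lmodType R) (dot : V -> V -> R).
Hypothesis dotP : inner_product dot.

Lemma dot0l z : dot 0 z = 0.
Proof.
have [lin _ _] := dotP; have := lin 1 0 0 z.
rewrite scale1r addr0 mul1r => /(congr1 (fun t => t - dot 0 z)).
by rewrite addrK subrr.
Qed.

Lemma dotDl x y z : dot (x + y) z = dot x z + dot y z.
Proof. by have [lin _ _] := dotP; rewrite -{1}[x]scale1r lin mul1r. Qed.

Lemma dotZl a x z : dot (a *: x) z = a * dot x z.
Proof. by have [lin _ _] := dotP; rewrite -[a *: x]addr0 lin dot0l addr0. Qed.

Lemma dot_suml (I : Type) (r : seq I) (P : pred I) (F : I -> V) z :
  dot (\sum_(k <- r | P k) F k) z = \sum_(k <- r | P k) dot (F k) z.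
Proof. exact: (big_morph (dot^~ z) (fun x y => dotDl x y z) (dot0l z)). Qed.

Lemma dotBr x y z : dot x (y - z) = dot x y - dot x z.
Proof.
have [_ sym _] := dotP.
by rewrite sym -scaleN1r dotDl dotZl mulN1r !(sym _ x).
Qed.

Lemma dot_orthogonal_sum (M : nat) (e : 'I_M -> V) (c : 'I_M -> R) k :
  (forall i j, i != j -> dot (e i) (e j) = 0) ->
  dot (\sum_i c i *: e i) (e k) = c k * dot (e k) (e k).
Proof.
move=> orth; rewrite dot_suml (bigD1 k) //= dotZl big1 ?addr0 // => i ik.
by rewrite dotZl orth ?mulr0.
Qed.

Lemma dot_orthogonal_expansion (M : nat) (e : 'I_M -> V) (beta : V)
    (c : 'I_M -> R) k :
  orthogonal_basis dot e -> beta != 0 ->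
  (dot beta beta)^-1 *: beta = \sum_j (c j / dot (e j) (e j)) *: e j ->
  dot beta (e k) = dot beta beta * c k.
Proof.
have [_ _ pd] := dotP; move=> [e_neq0 orth _] beta_neq0.
have beta_sq := pd _ beta_neq0; have ek_sq := pd _ (e_neq0 k).
move=> /(congr1 (dot^~ (e k))); rewrite dot_orthogonal_sum // dotZl.
by rewrite divfK ?gt_eqF // => <-; rewrite mulVKf ?gt_eqF.
Qed.

End InnerProduct.

Lemma irange_uniq (a b : int) : uniq (irange a b).
Proof. by rewrite map_inj_uniq ?iota_uniq // => x y /addrI []. Qed.

Lemma mem_irange (a b m : int) : a <= m <= b -> m \in irange a b.
Proof.
move=> /andP [am mb]; apply/mapP; exists (absz (m - a)); last by lia.
by rewrite mem_iota add0n ltnS; lia.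
Qed.

Lemma big_uniq_pred1 (W : nmodType) (I : eqType) (r : seq I) (a : I)
    (F : I -> W) :
  uniq r -> a \in r -> \sum_(x <- r) (if x == a then F x else 0) = F a.
Proof.
move=> r_uniq ar.
by rewrite -big_mkcond -big_filter filter_pred1_uniq ?big_seq1.
Qed.

Lemma sum_Delta (W : nmodType) (M L : nat) (l1 l2 : nat -> int)
    (hl : 'I_M -> nat) (ml : 'I_M -> int) (F : nat -> int -> 'I_M -> W) :
  (forall j, (1 <= hl j <= L)%N /\ l1 (hl j) <= ml j <= l2 (hl j)) ->
  \sum_(1 <= h < L.+1) \sum_(m <- irange (l1 h) (l2 h))
     \sum_(j in Delta hl ml h m) F h m j = \sum_j F (hl j) (ml j) j.
Proof.
move=> labels.
have split_cond h m : \sum_(j in Delta hl ml h m) F h m j =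
    \sum_j (if h == hl j then if m == ml j then F h m j else 0 else 0).
  rewrite big_mkcond; apply: eq_bigr => j _.
  by rewrite inE ![_ == hl j]eq_sym ![_ == ml j]eq_sym; case: (hl j == h).
under eq_bigr => h _ do under eq_bigr => m _ do rewrite split_cond.
under eq_bigr => h _ do rewrite exchange_big /=.
rewrite exchange_big /=; apply: eq_bigr => j _.
have [hj mj] := labels j.
rewrite (eq_bigr (fun h => if h == hl j then \sum_(m <- irange (l1 h) (l2 h))
    (if m == ml j then F h m j else 0) else 0)); last first.
  by move=> h _; case: eqP => // _; rewrite big1.
rewrite big_uniq_pred1 ?iota_uniq ?mem_index_iota ?ltnS //.
by rewrite big_uniq_pred1 ?irange_uniq ?mem_irange.
Qed.

Lemma add_int_eq1 (R : realDomainType) (d : R) (k : int) :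
  -1 < d < 1 -> d + k%:~R = 1 <-> k = 1 /\ d = 0.
Proof.
move=> /andP [d_gt d_lt].
have [k_le0 | [-> | k_ge2]] : k <= 0 \/ k = 1 \/ 2 <= k by lia.
- have : k%:~R <= 0 :> R by rewrite -(ler_int R) in k_le0.
  by split => [? | [k1 _]]; [lra | lia].
- by split => [? | [_ ->]]; [split; lra | rewrite add0r].
- have : 2 <= k%:~R :> R by rewrite -(ler_int R) in k_ge2.
  by split => [? | [k1 _]]; [lra | lia].
Qed.

Lemma add_int_ge1 (R : realDomainType) (d : R) (k : int) :
  -1 < d < 1 -> 1 <= d + k%:~R <-> 2 <= k \/ k = 1 /\ 0 <= d.
Proof.
move=> /andP [d_gt d_lt].
have [k_le0 | [-> | k_ge2]] : k <= 0 \/ k = 1 \/ 2 <= k by lia.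
- have : k%:~R <= 0 :> R by rewrite -(ler_int R) in k_le0.
  by split => [? | [|[]]]; [lra | lia | lia].
- by split => [? | [|[]]]; [right; split; lra | lia | lra].
- have : 2 <= k%:~R :> R by rewrite -(ler_int R) in k_ge2.
  by split => [? | _]; [left | lra].
Qed.

Lemma decreasing_itv_mono (disp : Order.disp_t) (T : porderType disp)
    (f : nat -> T) (L : nat) :
  (forall h, (1 <= h < L)%N -> (f h.+1 < f h)%O) ->
  {in [pred h | (1 <= h <= L)%N] &, {mono f : a b /~ (a <= b)%O}}.
Proof.
move=> f_dec; apply: Order.NatMonotonyTheory.decn_inP.
  by move=> a b /andP [a1 _] /andP [_ bL] c /andP [ac cb]; apply/andP; lia.
by move=> h /andP [h1 _] /andP [_ hL]; apply: f_dec; lia.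
Qed.

Theorem lemma5p3 (R : realType) (V : lmodType R) (dot : V -> V -> R)
  (M : nat) (e : 'I_M -> V) (beta : V)
  (L : nat) (l1 l2 : nat -> int) (hl : 'I_M -> nat) (ml : 'I_M -> int) :
  inner_product dot ->
  orthogonal_basis dot e ->
  beta != 0 ->
  (0 < L)%N ->
  (forall h : nat, (1 <= h <= L)%N -> l1 h <= l2 h) ->
  (forall j : 'I_M, (1 <= hl j <= L)%N /\ l1 (hl j) <= ml j <= l2 (hl j)) ->
  (forall (h : nat) (m : int), (1 <= h <= L)%N -> l1 h <= m <= l2 h ->
     Delta hl ml h m != set0) ->
  (forall h : nat, (1 <= h <= L)%N ->
     - (1 / 2) <= eps dot e hl ml l1 l2 h < 1 / 2) ->
  (forall h : nat, (1 <= h < L)%N ->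
     eps dot e hl ml l1 l2 h > eps dot e hl ml l1 l2 h.+1) ->
  (dot beta beta)^-1 *: beta =
    \sum_(1 <= h < L.+1) \sum_(m <- irange (l1 h) (l2 h))
      \sum_(j in Delta hl ml h m)
        ((eps dot e hl ml l1 l2 h - m%:~R) / dot (e j) (e j)) *: e j ->
  forall (i j : 'I_M) (h h' : nat) (m m' : int),
    i \in Delta hl ml h m -> j \in Delta hl ml h' m' ->
    (dot beta (e i - e j) = dot beta beta <-> h' = h /\ m' = m + 1) /\
    (dot beta (e i - e j) >= dot beta beta <->
       m' >= m + 2 \/ (m' = m + 1 /\ (h' >= h)%N)).
Proof.
move=> dotP e_basis beta_neq0 _ _ labels _ eps_bound eps_dec expansion.
set E := eps dot e hl ml l1 l2 in eps_bound eps_dec expansion *.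
set N := dot beta beta.
have N_gt0 : 0 < N by have [_ _ pd] := dotP; apply: pd.
rewrite (sum_Delta (fun h m j => ((E h - m%:~R) / dot (e j) (e j)) *: e j)) //
  in expansion.
have coord k := dot_orthogonal_expansion dotP k e_basis beta_neq0 expansion.
move=> i j h h' m m'; rewrite !inE.
move=> /andP [/eqP hi /eqP mi] /andP [/eqP hj /eqP mj].
have [hD h'D] : (1 <= h <= L)%N /\ (1 <= h' <= L)%N.
  by rewrite -hi -hj; split; apply: (labels _).1.
have E_le a b :
    (1 <= a <= L)%N -> (1 <= b <= L)%N -> (E b <= E a) = (a <= b)%N.
  by move=> aD bD; apply: (decreasing_itv_mono eps_dec).
have E_eq : E h - E h' = 0 <-> h' = h.
  split=> [/eqP | ->]; last exact: subrr.
  rewrite subr_eq0 => /eqP Ehh'; apply/eqP.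
  by rewrite eqn_leq -(E_le h' h) // -(E_le h h') // Ehh' lexx.
have E_diff : -1 < E h - E h' < 1.
  move: (eps_bound _ hD) (eps_bound _ h'D) => /andP [? ?] /andP [? ?].
  by apply/andP; lra.
have -> : dot beta (e i - e j) = N * ((E h - E h') + (m' - m)%:~R).
  by rewrite dotBr // !coord hi mi hj mj rmorphB /= /N; ring.
have N_eq x : N * x = N <-> x = 1.
  split=> [| -> ]; last exact: mulr1.
  by rewrite -{2}[N]mulr1 => /(mulfI (lt0r_neq0 N_gt0)).
have N_le x : (N <= N * x) = (1 <= x) by rewrite -{1}[N]mulr1 ler_pM2l.
rewrite N_eq N_le add_int_eq1 // add_int_ge1 // E_eq subr_ge0 E_le //.
by split; lia.
Qed.
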